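(* Let $S_i>0$, and let $u_{\min}<0<u_{\max}$ and $0<v_{\min}\le v_{\max}$ be constants. Let $v_i^0$ satisfy $v_{\min}\le v_i^0\le v_{\max}$. For $t_i^f>0$ define $$b_i=\frac{3(S_i-v_i^0t_i^f)}{2(t_i^f)^2},\qquad a_i=-\frac{b_i}{3t_i^f},$$ and the trajectory $p_i(t)=a_it^3+b_it^2+v_i^0t$, $v_i(t)=3a_it^2+2b_it+v_i^0$, $u_i(t)=6a_it+2b_i$ for $t\in[0,t_i^f]$ (so that $p_i(0)=0$, $v_i(0)=v_i^0$, $p_i(t_i^f)=S_i$, $u_i(t_i^f)=0$). Call $t_i^f$ feasible if $u_{\min}\le u_i(t)\le u_{\max}$ and $v_{\min}\le v_i(t)\le v_{\max}$ for all $t\in[0,t_i^f]$. Define $$t_{i,u_{\max}}^f=\frac{\sqrt{9(v_i^0)^2+12S_iu_{\max}}-3v_i^0}{2u_{\max}},\qquad t_{i,v_{\max}}^f=\frac{3S_i}{v_i^0+2v_{\max}},$$ and $t_{i,\min}^f=\min\{t_{i,u_{\max}}^f,\,t_{i,v_{\max}}^f\}$. Then $t_{i,\min}^f$ is a lower bound on the exit time imposed by the speed and control constraints: every feasible $t_i^f$ satisfies $t_i^f\ge t_{i,\min}^f$.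
   Context: This is the unconstrained energy-optimal (cubic-position) trajectory for a double-integrator vehicle $\dot p_i=v_i$, $\dot v_i=u_i$ traveling a distance $S_i$ starting at time $0$ from position $0$ with speed $v_i^0$, with exit time $t_i^f$ and terminal condition $u_i(t_i^f)=0$. The speed and control constraints are $u_{\min}\le u_i(t)\le u_{\max}$ and $0<v_{\min}\le v_i(t)\le v_{\max}$. *)

From Stdlib Require Import Reals.
Open Scope R_scope.

Definition coef_b (S v0 tf : R) : R := 3 * (S - v0 * tf) / (2 * tf ^ 2).
Definition coef_a (S v0 tf : R) : R := - coef_b S v0 tf / (3 * tf).

Definition pos_traj (S v0 tf t : R) : R :=
  coef_a S v0 tf * t ^ 3 + coef_b S v0 tf * t ^ 2 + v0 * t.
Definition vel_traj (S v0 tf t : R) : R :=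
  3 * coef_a S v0 tf * t ^ 2 + 2 * coef_b S v0 tf * t + v0.
Definition ctrl_traj (S v0 tf t : R) : R :=
  6 * coef_a S v0 tf * t + 2 * coef_b S v0 tf.

Definition feasible (S v0 umin umax vmin vmax tf : R) : Prop :=
  forall t, 0 <= t <= tf ->
    umin <= ctrl_traj S v0 tf t <= umax /\
    vmin <= vel_traj S v0 tf t <= vmax.

Definition tf_umax (S v0 umax : R) : R :=
  (sqrt (9 * v0 ^ 2 + 12 * S * umax) - 3 * v0) / (2 * umax).
Definition tf_vmax (S v0 vmax : R) : R := 3 * S / (v0 + 2 * vmax).
Definition tf_min (S v0 umax vmax : R) : R :=
  Rmin (tf_umax S v0 umax) (tf_vmax S v0 vmax).

(** The control [u] is affine
    and vanishes at [tf], so [u(0) = 3 (S - v0 tf) / tf^2 <= umax] rearranges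
    to [umax tf^2 + 3 v0 tf - 3 S >= 0]; as [tf > 0], [tf] then lies beyond the
    positive root of this quadratic, which is [tf_umax]. *)

From Stdlib Require Import Reals Lra Psatz.
Open Scope R_scope.

Lemma ctrl_traj_0 (S v0 tf : R) :
  tf <> 0 -> ctrl_traj S v0 tf 0 = 3 * (S - v0 * tf) / tf ^ 2.
Proof.
  intros Htf; unfold ctrl_traj, coef_a, coef_b.
  field; exact Htf.
Qed.

Lemma exit_quadratic_nonneg_of_ctrl_0 (S v0 umax tf : R) :
  0 < tf -> ctrl_traj S v0 tf 0 <= umax ->
  3 * S <= umax * tf ^ 2 + 3 * v0 * tf.
Proof.
  intros Htf Hu.
  rewrite ctrl_traj_0 in Hu by lra.
  assert (Htf2 : 0 < tf ^ 2) by (apply pow_lt; lra).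
  apply Rmult_le_compat_r with (r := tf ^ 2) in Hu; [|lra].
  unfold Rdiv in Hu; rewrite Rmult_assoc, Rinv_l in Hu by lra.
  lra.
Qed.

Lemma tf_umax_le (S v0 umax t : R) :
  0 < umax -> 0 <= 2 * umax * t + 3 * v0 ->
  3 * S <= umax * t ^ 2 + 3 * v0 * t ->
  tf_umax S v0 umax <= t.
Proof.
  intros Humax Hlin Hquad; unfold tf_umax.
  assert (Hsqrt : sqrt (9 * v0 ^ 2 + 12 * S * umax) <= 2 * umax * t + 3 * v0).
  { rewrite <- (sqrt_pow2 (2 * umax * t + 3 * v0)) by exact Hlin.
    apply sqrt_le_1_alt; nra. }
  apply (Rmult_le_reg_r (2 * umax)); [lra|].
  unfold Rdiv; rewrite Rmult_assoc, Rinv_l by lra.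
  lra.
Qed.

Theorem proposition1 (S umin umax vmin vmax v0 tf : R) :
  0 < S -> umin < 0 -> 0 < umax -> 0 < vmin -> vmin <= vmax ->
  vmin <= v0 <= vmax ->
  0 < tf ->
  feasible S v0 umin umax vmin vmax tf ->
  tf_min S v0 umax vmax <= tf.
Proof.
  intros _ _ Humax Hvmin _ Hv0 Htf Hfeas.
  destruct (Hfeas 0 ltac:(lra)) as [[_ Hu0] _].
  apply Rle_trans with (tf_umax S v0 umax); [apply Rmin_l|].
  apply tf_umax_le; [exact Humax | nra |].
  now apply exit_quadratic_nonneg_of_ctrl_0.
Qed.
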